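(* For every $n\ge25$ and every integer $t$ with $\frac{n^2}{8}+\frac{n}{2}-2\le t\le \frac{n^2}{4}+\frac{n^2}{16}-3n+\frac{205}{16}$, there exists an $(n,t)$-blocker.
   Context: For a convex $n$-gon: an edge is a segment between two vertices; diagonals are edges that are not sides of the polygon. Two edges cross if they share an interior point. A triangulation is a maximal set of pairwise non-crossing diagonals. A blocker is a set $B$ of diagonals having a diagonal in common with every triangulation; it is saturated if for every $e\in B$, $B\setminus\{e\}$ is not a blocker. An $(n,t)$-blocker is a saturated blocker of size $t$ for a convex $n$-gon. *)

From mathcomp Require Import all_boot all_order all_algebra.
Set Implicit Arguments. Unset Strict Implicit. Unset Printing Implicit Defensive.
Import Order.TTheory GRing.Theory Num.Theory.

(* Convex n-gon with vertices 0,1,...,n-1 in cyclic (convex) order.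
   An edge {i,j} (i<j) is encoded as the ordered pair (i,j) : 'I_n * 'I_n. *)
Section Polygon.
Variable n : nat.

Definition is_edge (e : 'I_n * 'I_n) : bool := (e.1 < e.2)%N.

Definition is_side (e : 'I_n * 'I_n) : bool :=
  is_edge e && ((e.2 == e.1.+1 :> nat) || ((e.1 == 0 :> nat) && (e.2 == n.-1 :> nat))).

Definition is_diagonal (e : 'I_n * 'I_n) : bool := is_edge e && ~~ is_side e.

(* for vertices in strictly convex position, two distinct edges share an
   interior point iff their endpoints strictly interleave *)
Definition cross (e f : 'I_n * 'I_n) : bool :=
  [&& (e.1 < f.1)%N, (f.1 < e.2)%N & (e.2 < f.2)%N] ||
  [&& (f.1 < e.1)%N, (e.1 < f.2)%N & (f.2 < e.2)%N].

Definition noncrossing (S : {set 'I_n * 'I_n}) : bool :=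
  [forall e in S, forall f in S, ~~ cross e f].

Definition triangulation (T : {set 'I_n * 'I_n}) : bool :=
  [&& [forall e in T, is_diagonal e], noncrossing T &
      [forall d, (is_diagonal d && (d \notin T)) ==> ~~ noncrossing (d |: T)]].

Definition blocker (B : {set 'I_n * 'I_n}) : bool :=
  [forall e in B, is_diagonal e] &&
  [forall T : {set 'I_n * 'I_n}, triangulation T ==> (B :&: T != set0)].

Definition saturated_blocker (B : {set 'I_n * 'I_n}) : bool :=
  blocker B && [forall e in B, ~~ blocker (B :\ e)].

End Polygon.

Definition nt_blocker (n : nat) (t : int) (B : {set 'I_n * 'I_n}) : Prop :=
  saturated_blocker B /\ (Posz #|B| = t).

From mathcomp Require Import all_boot all_order all_algebra.
From mathcomp Require Import zify ring lra.
Set Implicit Arguments. Unset Strict Implicit. Unset Printing Implicit Defensive.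

(* Saturated blockers are built on sub-polygons lo, ..., hi of consecutive vertices, and
   certified by exhibiting, for each element c, a non-crossing set that contains c and
   crosses every other element.  The diagonal (lo, v)
   together with all diagonals crossing it has size (v - lo - 1)(hi - v) + 1.  Grafting a
   saturated blocker C of a sub-polygon a..b, where lo < a and b < r < hi, adds (lo, r),
   (lo, b), (a, r) and the diagonals crossing (lo, r) that do not start at a or b: a
   triangulation avoiding all of these has crossers of (lo, r) starting at both a and b,
   hence contains (a, b) and restricts to a triangulation of a..b, which meets C.  A graft
   adds (r - lo - 3)(hi - r) + 3 to the size.  By induction every size in [2, reach q] is
   realised on q consecutive vertices, where reach q = floor(q^2/4) - q for q >= 14, and a
   last graft with r between 2n/3 and n - 2 covers the interval of the theorem. *)

Section ConvexPolygon.
Variable n' : nat.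
Local Notation N := n'.+1.
Local Notation edge := ('I_N * 'I_N)%type.

Definition crossn (u v u' v' : nat) : bool :=
  [&& u < u', u' < v & v < v'] || [&& u' < u, u < v' & v' < v].

Lemma crossE (e f : edge) : cross e f = crossn e.1 e.2 f.1 f.2.
Proof. by []. Qed.

Lemma cross_irr (e : edge) : ~~ cross e e.
Proof. rewrite crossE /crossn; lia. Qed.

Lemma crossC (e f : edge) : cross e f = cross f e.
Proof. rewrite !crossE /crossn; lia. Qed.

Definition subdiagn (lo hi u w : nat) : bool :=
  [&& lo <= u, u.+2 <= w, w <= hi & ~~ ((u == lo) && (w == hi))].

Definition subdiag (lo hi : nat) (e : edge) : bool := subdiagn lo hi e.1 e.2.

Lemma is_diagonal_subdiag (e : edge) : is_diagonal e = subdiag 0 n' e.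
Proof.
case: e => [[x hx] [y hy]].
rewrite /is_diagonal /is_side /is_edge /subdiag /subdiagn /=.
apply/idP/idP; lia.
Qed.

Lemma noncrossingP (S : {set edge}) :
  reflect {in S &, forall e f, ~~ cross e f} (noncrossing S).
Proof.
apply: (iffP forall_inP) => [H e f eS fS | H e eS].
  exact: (forall_inP (H e eS) f fS).
by apply/forall_inP => f fS; apply: H.
Qed.

Definition sub_triangulation (lo hi : nat) (S : {set edge}) : Prop :=
  [/\ {in S, forall e, subdiag lo hi e}, noncrossing S &
      forall g, subdiag lo hi g -> g \notin S -> exists2 h, h \in S & cross g h].

Definition sub_blocker (lo hi : nat) (C : {set edge}) : Prop :=
  {in C, forall c, subdiag lo hi c} /\
  forall S, sub_triangulation lo hi S -> exists2 c, c \in C & c \in S.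

(* Every triangulation extending [S] meets [C] in [c] only, so [C :\ c] is
   not a blocker. *)
Definition isolates (lo hi : nat) (C : {set edge}) (c : edge) (S : {set edge}) :=
  [/\ {in S, forall e, subdiag lo hi e}, noncrossing S, c \in S &
      {in C, forall c', c' != c -> exists2 h, h \in S & cross c' h}].

Definition sub_minimal (lo hi : nat) (C : {set edge}) : Prop :=
  {in C, forall c, exists S, isolates lo hi C c S}.

Lemma triangulation_sub (T : {set edge}) :
  triangulation T -> sub_triangulation 0 n' T.
Proof.
case/and3P => /forall_inP Tdiag Tnc /forallP Tmax.
split => // [e /Tdiag|g gdiag gT]; first by rewrite is_diagonal_subdiag.
move: (Tmax g); rewrite is_diagonal_subdiag gdiag gT /=.
case/forall_inPn => e eT /forall_inPn [f fT]; rewrite negbK => cef.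
move/noncrossingP: Tnc => Tnc.
move: eT fT cef; rewrite !in_setU1 => /predU1P[-> | eT] /predU1P[-> | fT].
- by rewrite (negbTE (cross_irr _)).
- by exists f.
- by rewrite crossC; exists e.
- by rewrite (negbTE (Tnc e f eT fT)).
Qed.

Lemma extend_triangulation (S : {set edge}) :
  {in S, forall e, subdiag 0 n' e} -> noncrossing S ->
  exists2 T, triangulation T & S \subset T.
Proof.
move=> Sdiag Snc.
pose ok (T : {set edge}) :=
  [&& S \subset T, [forall e in T, is_diagonal e] & noncrossing T].
have okS : ok S.
  by rewrite /ok subxx Snc andbT; apply/forall_inP => e /Sdiag; rewrite is_diagonal_subdiag.
have [T /and3P[ST Tdiag Tnc] Tmax] := arg_maxnP (fun T : {set edge} => #|T|) okS.
exists T => //; rewrite /triangulation Tdiag Tnc /=.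
apply/forallP => d; apply/implyP => /andP[ddiag dT]; apply/negP => dTnc.
have okdT : ok (d |: T).
  rewrite /ok dTnc (subset_trans ST (subsetUr _ _)) andbT.
  by apply/forall_inP => e /setU1P[-> | /(forall_inP Tdiag)].
by move: (Tmax _ okdT); rewrite cardsU1 dT; lia.
Qed.

Lemma saturated_blocker_of_sub (B : {set edge}) :
  sub_blocker 0 n' B -> sub_minimal 0 n' B -> saturated_blocker B.
Proof.
move=> [Bdiag Bmeets] Bmin.
have Bblocker : blocker B.
  apply/andP; split.
    by apply/forall_inP => e /Bdiag; rewrite is_diagonal_subdiag.
  apply/forallP => T; apply/implyP => /triangulation_sub /Bmeets [c cB cT].
  by apply/set0Pn; exists c; rewrite inE cB.
rewrite /saturated_blocker Bblocker; apply/forall_inP => e eB.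
have [S [Sdiag Snc eS Scross]] := Bmin e eB.
have [T Ttri ST] := extend_triangulation Sdiag Snc.
apply/negP => /andP[_ /forallP /(_ T)]; rewrite Ttri => /set0Pn [c].
rewrite !inE => /andP[/andP[ce cB] cT].
have [h hS ch] := Scross c cB ce.
case/and3P: Ttri => _ /noncrossingP Tnc _.
by rewrite (negbTE (Tnc c h cT (subsetP ST h hS))) in ch.
Qed.

Lemma sub_blocker_gap a b (C : {set edge}) : sub_blocker a b C -> 0 < #|C| -> a.+2 <= b.
Proof.
by case=> Csub _ /card_gt0P [c /Csub]; rewrite /subdiag /subdiagn; lia.
Qed.

Definition mkedge (u w : nat) : edge := (inord u, inord w).

Lemma mkedgeK lo hi u w : hi <= n' -> subdiagn lo hi u w ->
  (mkedge u w).1 = u :> nat /\ (mkedge u w).2 = w :> nat.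
Proof. by rewrite /subdiagn => hin uw; rewrite /= !inordK //; lia. Qed.

Lemma eq_mkedge (e : edge) u w : u <= n' -> w <= n' ->
  (e == mkedge u w) = (e.1 == u :> nat) && (e.2 == w :> nat).
Proof.
case: e => [x y] hu hw.
by rewrite xpair_eqE -!val_eqE /= !inordK.
Qed.

Definition diag_set (lo hi : nat) (P : nat -> nat -> bool) : {set edge} :=
  [set e | subdiag lo hi e && P e.1 e.2].

Lemma diag_set_sub lo hi P : {in diag_set lo hi P, forall e, subdiag lo hi e}.
Proof. by move=> e; rewrite inE => /andP[]. Qed.

Lemma mem_diag_set lo hi (P : nat -> nat -> bool) u w : hi <= n' ->
  subdiagn lo hi u w -> P u w -> mkedge u w \in diag_set lo hi P.
Proof.
move=> hin uw Puw; have [e1 e2] := mkedgeK hin uw.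
by rewrite inE /subdiag e1 e2 uw.
Qed.

Lemma diag_set_noncrossing lo hi (P : nat -> nat -> bool) :
  (forall u w u' w', P u w -> P u' w' -> subdiagn lo hi u w -> subdiagn lo hi u' w' ->
     ~~ crossn u w u' w') ->
  noncrossing (diag_set lo hi P).
Proof.
move=> H; apply/noncrossingP => e f; rewrite !inE => /andP[e_sub Pe] /andP[f_sub Pf].
by rewrite crossE; apply: H.
Qed.

Lemma diag_set_crossing lo hi (P : nat -> nat -> bool) (p q : 'I_N) u w : hi <= n' ->
  subdiagn lo hi u w -> P u w -> crossn p q u w ->
  exists2 h, h \in diag_set lo hi P & cross (p, q) h.
Proof.
move=> hin uw Puw cuw; exists (mkedge u w); first exact: mem_diag_set.
by rewrite crossE; have [-> ->] := mkedgeK hin uw.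
Qed.

Lemma card_ord_range (x y : nat) : y <= N -> #|[set i : 'I_N | x <= i < y]| = y - x.
Proof.
elim: y => [|y IH] hy.
  by apply/eqP; rewrite cards_eq0; apply/eqP/setP => i; rewrite !inE; lia.
have [xy | yx] := leqP x y.
  have -> : [set i : 'I_N | x <= i < y.+1] = inord y |: [set i : 'I_N | x <= i < y].
    by apply/setP => i; rewrite !inE -val_eqE /= inordK //; lia.
  by rewrite cardsU1 IH ?inE ?inordK //; lia.
have -> : [set i : 'I_N | x <= i < y.+1] = set0 by apply/setP => i; rewrite !inE; lia.
by rewrite cards0; lia.
Qed.


(* The quadrilateral lo < x < v < y with its diagonal (x, y). *)
Definition quad (lo x v y u w : nat) : bool :=
  [|| (u == x) && (w == y), (u == lo) && (w == x), (u == x) && (w == v),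
      (u == v) && (w == y) | (u == lo) && (w == y)].

Lemma quad_noncrossing lo x v y u w u' w' :
  lo < x < v -> v < y -> quad lo x v y u w -> quad lo x v y u' w' -> ~~ crossn u w u' w'.
Proof. rewrite /quad /crossn; lia. Qed.

Lemma quad_crossing lo hi x v y (P : nat -> nat -> bool) (p q : 'I_N) :
  hi <= n' -> lo < x < v -> v < y <= hi -> (forall u w, quad lo x v y u w -> P u w) ->
  lo < p < v -> v < q <= hi -> ~~ ((p == x :> nat) && (q == y :> nat)) ->
  exists2 h, h \in diag_set lo hi P & cross (p, q) h.
Proof.
move=> hin xv vy quadP pv vq ne.
have cross_at u w : subdiagn lo hi u w -> quad lo x v y u w -> crossn p q u w ->
    exists2 h, h \in diag_set lo hi P & cross (p, q) h.
  by move=> uw /quadP; apply: diag_set_crossing.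
have [px | xp | px] := ltngtP p x.
- by apply: (cross_at lo x); rewrite /subdiagn /quad /crossn; lia.
- by apply: (cross_at x v); rewrite /subdiagn /quad /crossn; lia.
- have [qy | yq | qy] := ltngtP q y.
  + by apply: (cross_at v y); rewrite /subdiagn /quad /crossn; lia.
  + by apply: (cross_at lo y); rewrite /subdiagn /quad /crossn; lia.
  + by rewrite px qy !eqxx in ne.
Qed.

Definition cross_family (lo v hi : nat) : {set edge} :=
  diag_set lo hi (fun u w => ((u == lo) && (w == v)) || [&& lo < u, u < v & v < w]).

Section CrossFamily.
Variables lo v hi : nat.
Hypotheses (lo_v : lo.+2 <= v) (v_hi : v < hi) (hi_n : hi <= n').

Lemma cross_family_blocker : sub_blocker lo hi (cross_family lo v hi).
Proof.
split=> [|S [Sdiag _ Smax]]; first exact: diag_set_sub.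
have lov : subdiagn lo hi lo v by rewrite /subdiagn; lia.
have lov_fam : mkedge lo v \in cross_family lo v hi by apply: mem_diag_set; rewrite ?eqxx.
have [lovS | lovS] := boolP (mkedge lo v \in S); first by exists (mkedge lo v).
have [|h hS ch] := Smax _ _ lovS; first exact: diag_set_sub lov_fam.
exists h => //; move: (Sdiag h hS) ch; rewrite /cross_family inE /subdiag crossE /=.
have [-> ->] := mkedgeK hi_n lov; rewrite /subdiagn /crossn; lia.
Qed.

Lemma cross_family_minimal : sub_minimal lo hi (cross_family lo v hi).
Proof.
move=> [x y]; rewrite /cross_family inE /subdiag /=.
case/andP=> xy /orP[/andP[/eqP ex /eqP ey] | /and3P[lox xv vy]].
- exists (diag_set lo hi (fun u w => (u == lo) && (w == v))); split.
  + exact: diag_set_sub.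
  + apply: diag_set_noncrossing => u w u' w' /andP[/eqP-> /eqP->] /andP[/eqP-> /eqP->].
    by rewrite /crossn; lia.
  + by rewrite inE /subdiag /= xy ex ey !eqxx.
  + move=> [p q]; rewrite inE /subdiag /subdiagn xpair_eqE -!val_eqE /= ex ey.
    move=> /andP[pq Pq] ne.
    by apply: (diag_set_crossing (u := lo) (w := v)); rewrite /subdiagn /crossn ?eqxx; lia.
- have yhi : y <= hi by move: xy; rewrite /subdiagn; lia.
  exists (diag_set lo hi (quad lo x v y)); split.
  + exact: diag_set_sub.
  + by apply: diag_set_noncrossing => u w u' w' *; apply: quad_noncrossing; lia.
  + by rewrite inE /subdiag /quad /= xy !eqxx.
  + move=> [p q]; rewrite inE /subdiag /subdiagn xpair_eqE -!val_eqE /=.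
    case/andP=> pq /orP[/andP[/eqP ep /eqP eq] | /and3P[lop pv vq]] ne.
      by apply: (diag_set_crossing (u := x) (w := y)); rewrite /subdiagn /quad /crossn; lia.
    by apply: quad_crossing => //=; lia.
Qed.

Lemma card_cross_family : #|cross_family lo v hi| = (v - lo - 1) * (hi - v) + 1.
Proof.
have lov : subdiagn lo hi lo v by rewrite /subdiagn; lia.
have -> : cross_family lo v hi =
    mkedge lo v |: setX [set i : 'I_N | lo < i < v] [set i : 'I_N | v < i < hi.+1].
  apply/setP => [[x y]].
  by rewrite /cross_family in_setU1 eq_mkedge ?inE /subdiag /subdiagn /=; lia.
rewrite cardsU1 cardsX !card_ord_range; try lia.
rewrite !inE; have [-> ->] := mkedgeK hi_n lov; lia.
Qed.

End CrossFamily.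

Lemma sub_triangulation_mem lo hi S u w : hi <= n' -> sub_triangulation lo hi S ->
  subdiagn lo hi u w -> {in S, forall h : edge, ~~ crossn u w h.1 h.2} -> mkedge u w \in S.
Proof.
move=> hin [_ _ Smax] uw nocross; apply: contraT => uwS.
have [|h hS] := Smax _ _ uwS; first by rewrite /subdiag; have [-> ->] := mkedgeK hin uw.
by rewrite crossE; have [-> ->] := mkedgeK hin uw; rewrite (negbTE (nocross h hS)).
Qed.

Lemma sub_triangulation_restrict lo hi S (e : edge) : sub_triangulation lo hi S -> e \in S ->
  sub_triangulation e.1 e.2 [set f in S | subdiag e.1 e.2 f].
Proof.
move=> [Sdiag Snc Smax] eS; split.
- by move=> f; rewrite inE => /andP[].
- apply/noncrossingP => f g; rewrite !inE => /andP[fS _] /andP[gS _].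
  exact: (noncrossingP _ Snc).
move=> g gsub; rewrite inE gsub andbT => gS.
have esub := Sdiag e eS.
have [|h hS ch] := Smax g _ gS; first by move: esub gsub; rewrite /subdiag /subdiagn; lia.
exists h; rewrite // inE hS /=.
move: (Sdiag h hS) (noncrossingP _ Snc e h eS hS) ch esub gsub.
by rewrite /subdiag /subdiagn !crossE /crossn; lia.
Qed.

Definition graft_pred (lo a b r u w : nat) : bool :=
  [|| [&& lo < u, u < r, r < w, u != a & u != b],
      (u == lo) && (w == b), (u == a) && (w == r) | (u == lo) && (w == r)].

Definition graft (lo a b r hi : nat) (C : {set edge}) : {set edge} :=
  C :|: diag_set lo hi (graft_pred lo a b r).

Section Graft.
Variables (lo a b r hi : nat) (C : {set edge}).
Hypotheses (lo_a : lo < a) (a_b : a.+2 <= b) (b_r : b < r) (r_hi : r < hi) (hi_n : hi <= n').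
Hypotheses (Cblk : sub_blocker a b C) (Cmin : sub_minimal a b C).

Local Notation G := (graft lo a b r hi C).

Lemma graft_sub : {in G, forall e, subdiag lo hi e}.
Proof.
move=> e; rewrite inE => /orP[/(proj1 Cblk) | /diag_set_sub //].
by rewrite /subdiag /subdiagn; lia.
Qed.

Lemma mem_graft u w : subdiagn lo hi u w -> graft_pred lo a b r u w -> mkedge u w \in G.
Proof. by move=> uw Puw; rewrite inE mem_diag_set ?orbT. Qed.

Section Crossers.
Variable S : {set edge}.
Hypothesis Stri : sub_triangulation lo hi S.
Hypothesis crossers_ab :
  {in S, forall h : edge, crossn lo r h.1 h.2 -> (h.1 == a :> nat) || (h.1 == b :> nat)}.

Lemma crossers_mem_ab (ha hb : edge) : ha \in S -> hb \in S ->
  ha.1 = a :> nat -> r < ha.2 -> hb.1 = b :> nat -> r < hb.2 -> mkedge a b \in S.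
Proof.
have [Sdiag /noncrossingP Snc _] := Stri; move=> haS hbS ha1 ha2 hb1 hb2.
apply: (sub_triangulation_mem hi_n Stri); first by rewrite /subdiagn; lia.
move=> h hS; move: (crossers_ab hS) (Snc h ha hS haS) (Snc h hb hS hbS) (Sdiag h hS).
by rewrite !crossE /subdiag /subdiagn /crossn; lia.
Qed.

Lemma crossers_mem_ar (ha : edge) : ha \in S -> ha.1 = a :> nat -> r < ha.2 ->
  {in S, forall h : edge, crossn lo r h.1 h.2 -> h.1 != b :> nat} -> mkedge a r \in S.
Proof.
have [Sdiag /noncrossingP Snc _] := Stri; move=> haS ha1 ha2 not_b.
apply: (sub_triangulation_mem hi_n Stri); first by rewrite /subdiagn; lia.
move=> h hS; move: (crossers_ab hS) (not_b h hS) (Snc h ha hS haS) (Sdiag h hS).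
by rewrite !crossE /subdiag /subdiagn /crossn; lia.
Qed.

Lemma crossers_mem_lob (hb : edge) : hb \in S -> hb.1 = b :> nat -> r < hb.2 ->
  {in S, forall h : edge, crossn lo r h.1 h.2 -> h.1 != a :> nat} -> mkedge lo b \in S.
Proof.
have [Sdiag /noncrossingP Snc _] := Stri; move=> hbS hb1 hb2 not_a.
apply: (sub_triangulation_mem hi_n Stri); first by rewrite /subdiagn; lia.
move=> h hS; move: (crossers_ab hS) (not_a h hS) (Snc h hb hS hbS) (Sdiag h hS).
by rewrite !crossE /subdiag /subdiagn /crossn; lia.
Qed.

End Crossers.

Lemma graft_blocker : sub_blocker lo hi G.
Proof.
split=> [|S Stri]; first exact: graft_sub.
have [Sdiag _ Smax] := Stri.
have lor : subdiagn lo hi lo r by rewrite /subdiagn; lia.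
have [lorS | lorS] := boolP (mkedge lo r \in S).
  by exists (mkedge lo r); rewrite // mem_graft // /graft_pred !eqxx !orbT.
have [d dS dcross] : exists2 d : edge, d \in S & crossn lo r d.1 d.2.
  have [|d dS] := Smax _ _ lorS; first by rewrite /subdiag; have [-> ->] := mkedgeK hi_n lor.
  by rewrite crossE; have [-> ->] := mkedgeK hi_n lor; exists d.
case: (boolP [exists h in S, [&& crossn lo r h.1 h.2, h.1 != a :> nat & h.1 != b :> nat]]).
  case/exists_inP => [[x y] hS hcross]; exists (x, y); rewrite // !inE (Sdiag _ hS) /=.
  apply/orP; right; move: hcross (Sdiag _ hS).
  by rewrite /graft_pred /subdiag /subdiagn /crossn /=; lia.
move/exists_inPn=> other.
have crossers_ab : {in S, forall h : edge,
    crossn lo r h.1 h.2 -> (h.1 == a :> nat) || (h.1 == b :> nat)}.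
  by move=> [x y] hS; move: (other _ hS) => /=; lia.
have apex_cross (h : edge) v : h \in S -> crossn lo r h.1 h.2 -> h.1 = v :> nat -> r < h.2.
  by move=> hS; move: (Sdiag h hS); rewrite /subdiag /subdiagn /crossn; lia.
case: (boolP [exists h in S, crossn lo r h.1 h.2 && (h.1 == a :> nat)]);
  case: (boolP [exists h in S, crossn lo r h.1 h.2 && (h.1 == b :> nat)]).
- case/exists_inP=> hb hbS /andP[crb /eqP hb1] /exists_inP [ha haS /andP[cra /eqP ha1]].
  have abS := crossers_mem_ab Stri crossers_ab haS hbS ha1 (apex_cross _ _ haS cra ha1)
                hb1 (apex_cross _ _ hbS crb hb1).
  have ab : subdiagn lo hi a b by rewrite /subdiagn; lia.
  have := sub_triangulation_restrict Stri abS; have [-> ->] := mkedgeK hi_n ab.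
  case/(proj2 Cblk) => c cC; rewrite inE => /andP[cS _].
  by exists c; rewrite // inE cC.
- move/exists_inPn=> no_b /exists_inP [ha haS /andP[cra /eqP ha1]].
  exists (mkedge a r); first by rewrite mem_graft /graft_pred ?eqxx ?orbT // /subdiagn; lia.
  apply: (crossers_mem_ar Stri crossers_ab haS ha1 (apex_cross _ _ haS cra ha1)).
  by move=> h hS hcross; move: (no_b h hS); rewrite hcross.
- case/exists_inP=> hb hbS /andP[crb /eqP hb1] /exists_inPn no_a.
  exists (mkedge lo b); first by rewrite mem_graft /graft_pred ?eqxx ?orbT // /subdiagn; lia.
  apply: (crossers_mem_lob Stri crossers_ab hbS hb1 (apex_cross _ _ hbS crb hb1)).
  by move=> h hS hcross; move: (no_a h hS); rewrite hcross.
- move=> /exists_inPn no_b /exists_inPn no_a.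
  by move: dcross (crossers_ab d dS dcross) (no_a d dS) (no_b d dS); case: d {dS} => x y /=; lia.
Qed.

Lemma in_graft (p q : 'I_N) : (p, q) \in G ->
  subdiagn a b p q \/ subdiagn lo hi p q /\ graft_pred lo a b r p q.
Proof. by rewrite inE => /orP[/(proj1 Cblk) | ]; [left | rewrite inE => /andP[]; right]. Qed.

Local Ltac cross_at u w :=
  apply: (diag_set_crossing (u := u) (w := w)); unfold subdiagn, crossn, quad in *; simpl; lia.

Lemma isolates_graft (Q : nat -> nat -> bool) (x y : 'I_N) :
  (forall u w u' w', Q u w -> Q u' w' -> ~~ crossn u w u' w') ->
  subdiagn lo hi x y -> Q x y ->
  (forall p q : 'I_N, subdiagn a b p q -> exists2 h, h \in diag_set lo hi Q & cross (p, q) h) ->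
  (forall p q : 'I_N, subdiagn lo hi p q -> graft_pred lo a b r p q ->
     ~~ ((p == x :> nat) && (q == y :> nat)) ->
     exists2 h, h \in diag_set lo hi Q & cross (p, q) h) ->
  isolates lo hi G (x, y) (diag_set lo hi Q).
Proof.
move=> Qnc xy Qxy cross_inner cross_graft; split.
- exact: diag_set_sub.
- by apply: diag_set_noncrossing => u w u' w' Quw Qu'w' _ _; apply: Qnc.
- by rewrite inE /subdiag xy.
- move=> [p q] /in_graft[pq | [pq Ppq]] ne; first exact: cross_inner.
  by apply: cross_graft; rewrite // -!val_eqE -negb_and; move: ne; rewrite xpair_eqE.
Qed.

Lemma isolates_graft_crosser (Q : nat -> nat -> bool) (x y : 'I_N) :
  (forall u w u' w', Q u w -> Q u' w' -> ~~ crossn u w u' w') ->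
  (forall u w, quad lo x r y u w -> Q u w) -> lo < x < r -> r < y <= hi ->
  (forall p q : 'I_N, subdiagn a b p q -> exists2 h, h \in diag_set lo hi Q & cross (p, q) h) ->
  (forall p q : 'I_N, p = lo :> nat -> q = b :> nat ->
     exists2 h, h \in diag_set lo hi Q & cross (p, q) h) ->
  (forall p q : 'I_N, p = a :> nat -> q = r :> nat ->
     exists2 h, h \in diag_set lo hi Q & cross (p, q) h) ->
  isolates lo hi G (x, y) (diag_set lo hi Q).
Proof.
move=> Qnc quadQ xr ry cross_inner cross_lob cross_ar.
apply: isolates_graft => //; first by rewrite /subdiagn; lia.
  by apply: quadQ; rewrite /quad !eqxx.
move=> p q pq /or4P[/and5P[lop pr rq _ _] | /andP[/eqP ep /eqP eq] | /andP[/eqP ep /eqP eq]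
                   | /andP[/eqP ep /eqP eq]] ne.
- by apply: (quad_crossing (x := x) (v := r) (y := y)) => //; move: pq; rewrite /subdiagn; lia.
- exact: cross_lob.
- exact: cross_ar.
- apply: (diag_set_crossing (u := x) (w := y)); [| | apply: quadQ |].
  all: by rewrite /subdiagn /crossn /quad; lia.
Qed.

(* Besides the quadrilateral lo, x, r, y, the witness fans out from a vertex outside
   [a, b], so that it crosses every diagonal of the sub-polygon a..b. *)
Lemma graft_isolates_crosser (x y : 'I_N) : subdiagn lo hi x y ->
  [&& lo < x, x < r, r < y, x != a :> nat & x != b :> nat] ->
  exists S, isolates lo hi G (x, y) S.
Proof.
rewrite /subdiagn => xy /and5P[lox xr ry xa xb].
have [x_a | a_x] := ltnP x a.
  exists (diag_set lo hi (fun u w => quad lo x r y u w || (u == x) && (w <= r))).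
  apply: isolates_graft_crosser; try lia.
  - by move=> u w u' w'; rewrite /quad /crossn; lia.
  - by move=> p q pq; cross_at x p.+1.
  - by move=> p q ep eq; cross_at x r.
  - by move=> p q ep eq; cross_at x a.+1.
have [x_b | b_x] := ltnP x b.
  exists (diag_set lo hi (fun u w =>
    [|| quad lo x r y u w, (u == lo) && (w <= x) | (w == r) && (x <= u)])).
  apply: isolates_graft_crosser; try lia.
  - by move=> u w u' w'; rewrite /quad /crossn; lia.
  - move=> p q pq; have [p_x | x_p] := ltnP p x; last by cross_at p.+1 r.
    by have [x_q | q_x] := ltnP x q; [cross_at x y | cross_at lo p.+1].
  - by move=> p q ep eq; cross_at x r.
  - by move=> p q ep eq; cross_at lo x.
exists (diag_set lo hi (fun u w => quad lo x r y u w || (w == x) && (lo <= u))).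
apply: isolates_graft_crosser; try lia.
- by move=> u w u' w'; rewrite /quad /crossn; lia.
- by move=> p q pq; cross_at p.+1 x.
- by move=> p q ep eq; cross_at a x.
- by move=> p q ep eq; cross_at x y.
Qed.

Lemma graft_isolates_lob (x y : 'I_N) : x = lo :> nat -> y = b :> nat ->
  exists S, isolates lo hi G (x, y) S.
Proof.
move=> ex ey; exists (diag_set lo hi (fun u w => (u == lo) && (w <= b) || (u == b) && (r <= w))).
apply: isolates_graft; try by rewrite /subdiagn ?ex ?ey ?eqxx /=; lia.
- by move=> u w u' w'; rewrite /crossn; lia.
- by move=> p q pq; cross_at lo p.+1.
move=> p q pq /or4P[/and5P[lop pr rq pa pb] | lob | ar | lor] ne.
- by have [p_b | b_p] := ltnP p b; [cross_at lo b | cross_at b r].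
- by move: ne lob; rewrite ex ey; lia.
- by cross_at lo b.
- by cross_at b hi.
Qed.

Lemma graft_isolates_ar (x y : 'I_N) : x = a :> nat -> y = r :> nat ->
  exists S, isolates lo hi G (x, y) S.
Proof.
move=> ex ey; exists (diag_set lo hi (fun u w =>
  [|| (u == lo) && (w == a), (w == r) && (a <= u) | (u == a) && (r <= w)])).
apply: isolates_graft; try by rewrite /subdiagn ?ex ?ey ?eqxx /=; lia.
- by move=> u w u' w'; rewrite /crossn; lia.
- by move=> p q pq; cross_at p.+1 r.
move=> p q pq /or4P[/and5P[lop pr rq pa pb] | lob | ar | lor] ne.
- by have [p_a | a_p] := ltnP p a; [cross_at lo a | cross_at a r].
- by cross_at a r.
- by move: ne ar; rewrite ex ey; lia.
- by cross_at a hi.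
Qed.

Lemma graft_isolates_lor (x y : 'I_N) : x = lo :> nat -> y = r :> nat ->
  exists S, isolates lo hi G (x, y) S.
Proof.
move=> ex ey; exists (diag_set lo hi (fun u w =>
  [|| (u == lo) && (w == r), (u == lo) && (w == a.+1) | (w == r) && (a < u)])).
apply: isolates_graft; try by rewrite /subdiagn ?ex ?ey ?eqxx /=; lia.
- by move=> u w u' w'; rewrite /crossn; lia.
- by move=> p q pq; have [p_a | a_p] := leqP p a; [cross_at lo a.+1 | cross_at p.+1 r].
move=> p q pq /or4P[W | lob | ar | lor] ne.
- by cross_at lo r.
- by cross_at a.+1 r.
- by cross_at lo a.+1.
- by move: ne lor; rewrite ex ey; lia.
Qed.

Lemma graft_isolates_C c : c \in C -> exists S, isolates lo hi G c S.
Proof.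
move=> cC; have [S [Ssub /noncrossingP Snc cS Scross]] := Cmin cC.
pose Z u w := [|| (u == lo) && (w == a), (u == a) && (w == b),
                  (u == b) && (r <= w) | (u == a) && (w == hi)].
have SZ e f : e \in S -> f \in diag_set lo hi Z -> ~~ cross e f.
  move=> /Ssub; case: e f => [u w] [u' w']; rewrite inE /subdiag /subdiagn crossE /crossn /Z /=.
  lia.
exists (S :|: diag_set lo hi Z); split.
- move=> e /setUP[/Ssub | /diag_set_sub //]; rewrite /subdiag /subdiagn; lia.
- apply/noncrossingP => e f /setUP[eS | eZ] /setUP[fS | fZ].
  + exact: Snc.
  + exact: SZ.
  + by rewrite crossC; apply: SZ.
  + have /noncrossingP Znc : noncrossing (diag_set lo hi Z).
      by apply: diag_set_noncrossing => u w u' w'; rewrite /Z /subdiagn /crossn; lia.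
    exact: Znc.
- by rewrite inE cS.
- move=> [p q] pqG ne; have [pqC | pqC] := boolP ((p, q) \in C).
    by have [h hS ch] := Scross _ pqC ne; exists h; rewrite // inE hS.
  suff [h hZ ch] : exists2 h, h \in diag_set lo hi Z & cross (p, q) h.
    by exists h; rewrite // inE hZ orbT.
  move: pqG; rewrite /Z inE (negbTE pqC) inE /subdiag /=.
  case/andP=> pq /or4P[/and5P[lop pr rq pa pb] | lob | ar | lor].
  + have [p_a | a_p] := ltnP p a; first by cross_at lo a.
    by have [p_b | b_p] := ltnP p b; [cross_at a b | cross_at b r].
  + by cross_at a hi.
  + by cross_at b hi.
  + by cross_at b hi.
Qed.

Lemma graft_minimal : sub_minimal lo hi G.
Proof.
move=> [x y]; rewrite inE => /orP[/graft_isolates_C // | ].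
rewrite inE /subdiag => /andP[xy /or4P[W | lob | ar | lor]].
- exact: graft_isolates_crosser.
- by case/andP: lob => /eqP ex /eqP ey; apply: graft_isolates_lob.
- by case/andP: ar => /eqP ex /eqP ey; apply: graft_isolates_ar.
- by case/andP: lor => /eqP ex /eqP ey; apply: graft_isolates_lor.
Qed.

Lemma card_graft : #|G| = #|C| + ((r - lo - 3) * (hi - r) + 3).
Proof.
have ord_a : a <= n' by lia.
have ord_b : b <= n' by lia.
pose X := setX ([set i : 'I_N | lo < i < r] :\: [set inord a; inord b])
               [set j : 'I_N | r < j < hi.+1].
rewrite /graft.
have -> : diag_set lo hi (graft_pred lo a b r) =
    mkedge lo b |: (mkedge a r |: (mkedge lo r |: X)).
  apply/setP => [[x y]]; rewrite !in_setU1 !eq_mkedge ?inE /subdiag /subdiagn /graft_pred /=;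
    try lia.
  by rewrite -!val_eqE /= !inordK //; lia.
have lob_ar_lor : [/\ mkedge lo b \notin mkedge a r |: (mkedge lo r |: X),
    mkedge a r \notin mkedge lo r |: X & mkedge lo r \notin X].
  by rewrite !in_setU1 !eq_mkedge ?inE -?val_eqE /= ?inordK //; try split; lia.
have ab_range : [set inord a; inord b] \subset [set i : 'I_N | lo < i < r].
  by apply/subsetP => i; rewrite !inE -!val_eqE /= !inordK //; lia.
have card_ab : #|[set inord a; inord b] : {set 'I_N}| = 2.
  by rewrite cards2 -val_eqE /= !inordK //; case: eqP => //; lia.
have CX : C :&: (mkedge lo b |: (mkedge a r |: (mkedge lo r |: X))) = set0.
  apply/setP => [[x y]]; rewrite !inE !eq_mkedge ?inE /=; try lia.
  apply/negP => /andP[/(proj1 Cblk)]; rewrite /subdiag /subdiagn /=.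
  by rewrite -?val_eqE /= ?inordK //; lia.
case: lob_ar_lor => n1 n2 n3.
rewrite cardsU CX cards0 subn0 !cardsU1 n1 n2 n3 cardsX cardsDS // card_ab !card_ord_range; lia.
Qed.

End Graft.
End ConvexPolygon.

Definition graft_size (q r : nat) : nat := (r - 3) * (q - 1 - r) + 3.

Definition reach_big (x : nat) : nat := x %/ 2 * (x - x %/ 2) - x.

(* Every size in [2, reach q] is realised on q consecutive vertices; below 14 the table
   lists the largest such bounds that the recursion attains. *)
Definition reach (q : nat) : nat :=
  if q < 14 then nth 0 [:: 0; 0; 0; 0; 2; 3; 5; 5; 10; 13; 17; 21; 26; 31] q else reach_big q.

Definition reach_step (q s : nat) : bool :=
  [|| s <= reach q.-1,
      has (fun qq => has (fun k => s == k * (qq - 2 - k) + 1) (iota 1 (qq - 3))) (iota 4 (q - 3))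
    | has (fun r => graft_size q r + 2 <= s <= graft_size q r + reach r.-1) (iota 5 (q - 6))].

Lemma reach_step_small q s : q < 14 -> 2 <= s <= reach q -> reach_step q s.
Proof.
have: all (fun q => all (reach_step q) (iota 2 (reach q).-1)) (iota 0 14) by vm_compute.
move=> /allP /(_ q) + q14 s_range; rewrite mem_iota => /(_ q14) /allP; apply.
by rewrite mem_iota; lia.
Qed.

Lemma reach_big_bounds x : 4 <= x ->
  x * x <= 4 * reach_big x + 4 * x + 1 /\ 4 * reach_big x + 4 * x <= x * x.
Proof.
move=> x4; rewrite /reach_big.
have [m [ex | ex]] : exists m, x = m * 2 \/ x = m * 2 + 1.
  by exists (x %/ 2); case: (boolP (odd x)) => ox; [right | left]; lia.
all: subst x.
- have -> : m * 2 %/ 2 = m by lia.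
  have -> : m * 2 - m = m by lia.
  have : m * 2 <= m * m by rewrite leq_mul2l; lia.
  nia.
- have -> : (m * 2 + 1) %/ 2 = m by lia.
  have -> : m * 2 + 1 - m = m + 1 by lia.
  have : m * 2 <= m * m by rewrite leq_mul2l; lia.
  nia.
Qed.

Lemma reach_big_le x : reach_big x <= reach x.
Proof.
rewrite /reach; case: ltnP => // x14.
have: all (fun x => reach_big x <= reach x) (iota 0 14) by vm_compute.
by move/allP/(_ x); rewrite mem_iota /reach x14; apply.
Qed.

Lemma reach_ge x : 8 <= x -> x <= reach x.
Proof.
move=> x8; have [low _] := @reach_big_bounds x ltac:(lia).
have : 8 * x <= x * x by rewrite leq_mul2r; lia.
have := reach_big_le x; lia.
Qed.

Lemma cover_chain (L U : nat -> nat) r1 r2 t : r1 <= r2 ->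
  (forall r, r1 < r <= r2 -> L r.-1 <= (U r).+1) -> L r2 <= t <= U r1 ->
  exists2 r, r1 <= r <= r2 & L r <= t <= U r.
Proof.
move=> r12; have [d ->] : exists d, r2 = r1 + d by exists (r2 - r1); lia.
elim: d r1 {r12} => [|d IH] r1 overlap /andP[Lt tU].
  by rewrite addn0 in Lt *; exists r1; rewrite ?leqnn ?Lt.
have [Lt1 | tL1] := leqP (L r1) t; first by exists r1; rewrite ?Lt1 //; lia.
have overlap' r : r1.+1 < r <= r1.+1 + d -> L r.-1 <= (U r).+1.
  by move=> hr; apply: overlap; lia.
have range' : L (r1.+1 + d) <= t <= U r1.+1.
  by rewrite addSnnS Lt /=; have /= := overlap r1.+1; lia.
by have [r hr rt] := IH r1.+1 overlap' range'; exists r => //; lia.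
Qed.

Lemma graft_size_pred q r : 4 <= r -> r < q -> graft_size q r.-1 + q + 3 = graft_size q r + 2 * r.
Proof.
move=> r4 rq; rewrite /graft_size.
have [i ri] : exists i, r = i + 4 by exists (r - 4); lia.
have [j qj] : exists j, q = i + j + 5 by exists (q - i - 5); lia.
subst r q.
have -> : (i + 4).-1 - 3 = i by lia.
have -> : i + j + 5 - 1 - (i + 4).-1 = j + 1 by lia.
have -> : i + 4 - 3 = i + 1 by lia.
have -> : i + j + 5 - 1 - (i + 4) = j by lia.
ring.
Qed.

Lemma graft_intervals_overlap q r : 9 <= r -> r.+2 <= q ->
  graft_size q r.-1 + 2 <= (graft_size q r + reach r.-1).+1.
Proof.
by move=> r9 rq; have := @graft_size_pred q r; have := @reach_ge r.-1; lia.
Qed.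

Lemma reach_step_big q s : 14 <= q -> 2 <= s <= reach q -> reach_step q s.
Proof.
move=> q14 /andP[s2 sq]; rewrite /reach_step.
have [// | s_gt] := leqP s (reach q.-1); apply/orP; right; apply/orP; right.
pose L r := graft_size q r + 2; pose U r := graft_size q r + reach r.-1.
have overlap r : q - 4 < r <= q - 2 -> L r.-1 <= (U r).+1.
  by move=> hr; apply: graft_intervals_overlap; lia.
have range : L (q - 2) <= s <= U (q - 4).
  have [bq5 _] := @reach_big_bounds (q - 5) ltac:(lia).
  have [_ bq] := @reach_big_bounds q ltac:(lia).
  have sq5 : (q - 5) * (q - 5) + 10 * q = q * q + 25 by nia.
  have := @reach_ge q.-1; have := reach_big_le (q - 5).
  rewrite /reach ltnNge q14 /= in sq.
  rewrite /L /U /graft_size.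
  have -> : q - 1 - (q - 2) = 1 by lia.
  have -> : q - 1 - (q - 4) = 3 by lia.
  have -> : (q - 4).-1 = q - 5 by lia.
  lia.
have [r hr rs] := @cover_chain L U (q - 4) (q - 2) s ltac:(lia) overlap range.
by apply/hasP; exists r; rewrite ?mem_iota //; lia.
Qed.

Section Realizable.
Variable n' : nat.
Local Notation N := n'.+1.
Local Notation edge := ('I_N * 'I_N)%type.
Local Notation cross_family := (@cross_family n').

Definition realizable (q s : nat) : Prop :=
  forall lo, lo + q <= N -> exists a b (C : {set edge}),
    [/\ lo <= a, b < lo + q, sub_blocker a b C, sub_minimal a b C & #|C| = s].

Lemma realizable_widen q q' s : q <= q' -> realizable q s -> realizable q' s.
Proof.
move=> qq' Hq lo lo_q'; have [a [b [C [lo_a b_q *]]]] := Hq lo ltac:(lia).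
by exists a, b, C; split => //; lia.
Qed.

Lemma realizable_cross_family q k : 0 < k -> k + 3 <= q -> realizable q (k * (q - 2 - k) + 1).
Proof.
move=> k0 kq lo lo_q; exists lo, (lo + q - 1), (cross_family lo (lo + k + 1) (lo + q - 1)).
split; try lia.
- by apply: cross_family_blocker; lia.
- by apply: cross_family_minimal; lia.
- by rewrite card_cross_family; lia.
Qed.

Lemma graft_realizable lo q r s : realizable r.-1 s -> 0 < s -> r.+2 <= q -> lo + q <= N ->
  exists C : {set edge}, [/\ sub_blocker lo (lo + q).-1 C, sub_minimal lo (lo + q).-1 C
                           & #|C| = s + graft_size q r].
Proof.
move=> Hr s0 rq lo_q; have [a [b [C [lo_a b_r Cblk Cmin Cs]]]] := Hr lo.+1 ltac:(lia).
have a_b : a.+2 <= b by apply: sub_blocker_gap Cblk _; rewrite Cs.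
exists (graft lo a b (lo + r) (lo + q).-1 C); split.
- by apply: graft_blocker => //; lia.
- by apply: graft_minimal => //; lia.
by rewrite card_graft ?Cs /graft_size //; lia.
Qed.

Lemma realizable_graft q r s : realizable r.-1 s -> 0 < s -> r.+2 <= q ->
  realizable q (s + graft_size q r).
Proof.
move=> Hr s0 rq lo lo_q; have [C [Cblk Cmin Cs]] := graft_realizable Hr s0 rq lo_q.
by exists lo, (lo + q).-1, C; split => //; lia.
Qed.

Lemma realizable_reach q s : 2 <= s <= reach q -> realizable q s.
Proof.
elim/ltn_ind: q s => q IH s s_range.
have q_pos : 0 < q by case: q s_range {IH}; rewrite /reach //=; lia.
have : reach_step q s.
  by have [q14 | q14] := ltnP q 14; [apply: reach_step_small | apply: reach_step_big].
case/or3P=> [s_prev | /hasP[qq] | /hasP[r]].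
- by apply: (realizable_widen (leq_pred q)); apply: IH; lia.
- rewrite mem_iota => qq_range /hasP[k]; rewrite mem_iota => k_range /eqP ->.
  by apply: (realizable_widen (_ : qq <= q)); [lia | apply: realizable_cross_family; lia].
- rewrite mem_iota => r_range s_graft.
  rewrite -(subnK (_ : graft_size q r <= s)); last lia.
  by apply: realizable_graft; [apply: IH; lia | lia | lia].
Qed.

End Realizable.

(* For r = 2n/3 the quadratic part of graft_size n r + reach (r - 1) is n^2/3 > 5n^2/16;
   the identities below make the comparison linear in n^2, r n and r^2. *)
Lemma top_graft_bound n t : 25 <= n -> 16 * t + 48 * n <= 5 * (n * n) + 205 ->
  t <= graft_size n (n * 2 %/ 3) + reach (n * 2 %/ 3).-1.
Proof.
move=> n25 t_le.
have [e [e2 ne]] : exists e, e <= 2 /\ n * 2 = n * 2 %/ 3 * 3 + e by exists (n * 2 %% 3); lia.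
move: (n * 2 %/ 3) ne => r ne.
have [F_lo _] := @reach_big_bounds r.-1 ltac:(lia).
have := reach_big_le r.-1.
have gs : (r - 3) * (n - 1 - r) + r * r + 3 * n = r * n + 2 * r + 3.
  have [c rc] : exists c, r = c + 3 by exists (r - 3); lia.
  have [d nd] : exists d, n = r + 1 + d by exists (n - 1 - r); lia.
  rewrite nd rc.
  have -> : c + 3 - 3 = c by lia.
  have -> : c + 3 + 1 + d - 1 - (c + 3) = d by lia.
  ring.
have sq : r.-1 * r.-1 + 2 * r = r * r + 1.
  have [c ->] : exists c, r = c.+1 by exists r.-1; lia.
  by rewrite -pred_Sn; ring.
have hn : n * 2 * n = r * 3 * n + e * n by rewrite ne mulnDl.
have hr : n * 2 * r = r * 3 * r + e * r by rewrite ne mulnDl.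
have en : e * n <= 2 * n by rewrite leq_mul2r; lia.
have rn : 10 * n <= r * n by rewrite leq_mul2r; lia.
by rewrite /graft_size; lia.
Qed.

Lemma top_graft_range n t : 25 <= n -> n * n + 4 * n <= 8 * t + 16 ->
  16 * t + 48 * n <= 5 * (n * n) + 205 ->
  exists2 r, r.+2 <= n & graft_size n r + 2 <= t <= graft_size n r + reach r.-1.
Proof.
move=> n25 t_ge t_le.
pose L r := graft_size n r + 2; pose U r := graft_size n r + reach r.-1.
have overlap r : n * 2 %/ 3 < r <= n - 2 -> L r.-1 <= (U r).+1.
  by move=> hr; apply: graft_intervals_overlap; lia.
have range : L (n - 2) <= t <= U (n * 2 %/ 3).
  rewrite /L /U top_graft_bound // andbT /graft_size.
  have -> : n - 1 - (n - 2) = 1 by lia.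
  have : 25 * n <= n * n by rewrite leq_mul2r; lia.
  lia.
have [r hr rt] := @cover_chain L U (n * 2 %/ 3) (n - 2) t ltac:(lia) overlap range.
by exists r => //; lia.
Qed.

Import Order.TTheory GRing.Theory Num.Theory.
Local Open Scope ring_scope.

Lemma nat_bounds_of_rat (n : nat) (t : int) :
  (25 <= n)%N ->
  (n%:R ^+ 2 / 8 + n%:R / 2 - 2 <= t%:~R :> rat) ->
  (t%:~R <= n%:R ^+ 2 / 4 + n%:R ^+ 2 / 16 - 3 * n%:R + 205 / 16 :> rat) ->
  exists2 m : nat, t = m%:Z &
    (n * n + 4 * n <= 8 * m + 16)%N /\ (16 * m + 48 * n <= 5 * (n * n) + 205)%N.
Proof.
move=> n25 t_lo t_hi.
have n_ge : (25%:R <= n%:R :> rat) by rewrite ler_nat.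
have [m tm] : exists m : nat, t = m.
  case: t t_lo t_hi => [m | m] t_lo t_hi; first by exists m.
  have : (Negz m)%:~R < 0 :> rat by rewrite ltrz0.
  lra.
subst t; exists m => //; rewrite -!(ler_nat rat) !natrD !natrM.
rewrite (_ : (m%:Z)%:~R = m%:R :> rat) // !expr2 in t_lo t_hi.
by split; lra.
Qed.

Theorem lemma3p4 (n : nat) (t : int) :
  (25 <= n)%N ->
  (n%:R ^+ 2 / 8 + n%:R / 2 - 2 <= t%:~R :> rat) ->
  (t%:~R <= n%:R ^+ 2 / 4 + n%:R ^+ 2 / 16 - 3 * n%:R + 205 / 16 :> rat) ->
  exists B : {set 'I_n * 'I_n}, nt_blocker t B.
Proof.
case: n => [// | n'] n25 t_lo t_hi.
have [m -> [m_ge m_le]] := nat_bounds_of_rat n25 t_lo t_hi.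
have [r r_n /andP[m_r r_m]] := top_graft_range n25 m_ge m_le.
have inner : realizable n' r.-1 (m - graft_size n'.+1 r) by apply: realizable_reach; lia.
have [|B [Bblk Bmin Bcard]] := graft_realizable (lo := 0) inner _ r_n (leqnn _); first lia.
exists B; split; first exact: saturated_blocker_of_sub.
by rewrite Bcard subnK //; lia.
Qed.
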